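(* Let $G$ be a non-elementary hyperbolic group and $M$ the maximum order of a finite subgroup of $G$. For every element $g\in G$ of infinite order, the commensurability class of $g$ contains at most $2M$ conjugacy classes of primitive elements.
   Context: Elements $g,h$ are commensurated if $k^{-1}g^mk=h^n$ for some $m,n\in\mathbb{Z}\setminus\{0\}$, $k\in G$. For $g$ of infinite order, $E^+_G(g)=\{h\mid h^{-1}g^mh=g^m\text{ for some }m\ne0\}$; $g$ is primitive if it has infinite order and $E^+_G(g)=\langle g\rangle F\cong\langle g\rangle\times F$ for some finite subgroup $F$. *)

From Stdlib Require Import ZArith List.
Import ListNotations.
Open Scope Z_scope.

Record Group := {
  carrier :> Type;
  gmul : carrier -> carrier -> carrier;
  gone : carrier;
  ginv : carrier -> carrier;
  gmulA : forall x y z, gmul x (gmul y z) = gmul (gmul x y) z;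
  gmul1l : forall x, gmul gone x = x;
  gmulVl : forall x, gmul (ginv x) x = gone
}.

Section Defs.
Variable G : Group.
Local Notation "x * y" := (gmul G x y).
Local Notation "1" := (gone G).

Fixpoint npow (x : G) (n : nat) : G :=
  match n with O => 1 | S k => x * npow x k end.

Definition zpow (x : G) (z : Z) : G :=
  match z with
  | Z0 => 1
  | Zpos p => npow x (Pos.to_nat p)
  | Zneg p => ginv G (npow x (Pos.to_nat p))
  end.

Definition conj (k x : G) : G := ginv G k * (x * k).

Definition has_infinite_order (g : G) : Prop := forall n, n <> 0 -> zpow g n <> 1.

Definition finite_subgroup (F : list G) : Prop :=
  NoDup F /\ In 1 F /\
  (forall x y, In x F -> In y F -> In (x * y) F) /\
  (forall x, In x F -> In (ginv G x) F).

Definition word_prod (w : list G) : G := fold_right (fun a b => a * b) 1 w.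

Definition letters (S : list G) (w : list G) : Prop :=
  forall a, In a w -> In a S \/ In (ginv G a) S.

Definition generates (S : list G) : Prop :=
  forall x, exists w, letters S w /\ word_prod w = x.

Definition is_word_length (S : list G) (len : G -> nat) : Prop :=
  forall x,
    (exists w, letters S w /\ word_prod w = x /\ length w = len x) /\
    (forall w, letters S w -> word_prod w = x -> (len x <= length w)%nat).

(** Gromov hyperbolicity of the Cayley graph, via the four-point condition
    on the word metric d(x,y) = |x^-1 y|_S (doubled Gromov products). *)
Definition hyperbolic_group : Prop :=
  exists (S : list G) (len : G -> nat) (delta : Z),
    generates S /\ is_word_length S len /\
    let d x y := Z.of_nat (len (ginv G x * y)) in
    let gp2 x y w := d w x + d w y - d x y in
    forall x y z w, gp2 x z w >= Z.min (gp2 x y w) (gp2 y z w) - 2 * delta.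

(** Virtually cyclic: some cyclic subgroup <c> has finite index. *)
Definition virtually_cyclic : Prop :=
  exists (c : G) (R : list G), forall x, exists r n, In r R /\ x = r * zpow c n.

Definition non_elementary_hyperbolic : Prop :=
  hyperbolic_group /\ ~ virtually_cyclic.

Definition max_finite_subgroup_order (M : nat) : Prop :=
  (exists F, finite_subgroup F /\ length F = M) /\
  (forall F, finite_subgroup F -> (length F <= M)%nat).

Definition commensurated (g h : G) : Prop :=
  exists m n k, m <> 0 /\ n <> 0 /\ conj k (zpow g m) = zpow h n.

Definition Eplus (g h : G) : Prop :=
  exists m, m <> 0 /\ conj h (zpow g m) = zpow g m.

(** g primitive: infinite order and E^+(g) = <g>F = <g> x F, F finite. *)
Definition primitive (g : G) : Prop :=
  has_infinite_order g /\
  exists F, finite_subgroup F /\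
    (forall f, In f F -> f * g = g * f) /\
    (forall h, Eplus g h <-> exists n f, In f F /\ h = zpow g n * f).

Definition conjugate (x y : G) : Prop := exists k, conj k x = y.

End Defs.

From Stdlib Require Import ZArith List Lia Classical ClassicalEpsilon.

(* Fix one primitive element h0 of the list, with E^+(h0) = <h0> x F0.  If h is
   primitive and commensurated with h0, some conjugate h' of h has a power equal
   to a power of h0, so h' in E^+(h0) and h0 in E^+(h'); hence h' = h0^c f and
   h0 = h'^d f' with f, f' of finite order.  Then h0^(1 - c d) has finite order,
   so c d = 1 and h is conjugate to h0^(+-1) f.  There are at most 2 |F0| <= 2M
   such elements. *)

Arguments gmul {_} _ _.  Arguments gone {_}.  Arguments ginv {_} _.
Arguments gmulA {_} _ _ _.  Arguments gmul1l {_} _.  Arguments gmulVl {_} _.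
Arguments npow {_} _ _.  Arguments zpow {_} _ _.  Arguments conj {_} _ _.

Local Infix "·" := gmul (at level 40, left associativity).

Section Groups.
Context {G : Group}.
Implicit Types x y z a b k f : G.

Lemma mulg_cancel_l a x y : a · x = a · y -> x = y.
Proof.
  intro E. rewrite <- (gmul1l x), <- (gmul1l y), <- (gmulVl a), <- !gmulA, E.
  reflexivity.
Qed.

Lemma mulgV x : x · ginv x = gone.
Proof.
  assert (Hidem : (x · ginv x) · (x · ginv x) = x · ginv x).
  { rewrite <- gmulA, (gmulA (ginv x)), gmulVl, gmul1l. reflexivity. }
  rewrite <- (gmul1l (x · ginv x)), <- (gmulVl (x · ginv x)), <- gmulA, Hidem.
  reflexivity.
Qed.

Lemma mulg1 x : x · gone = x.
Proof. rewrite <- (gmulVl x), gmulA, mulgV, gmul1l. reflexivity. Qed.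

Lemma invg_uniq x y : x · y = gone -> y = ginv x.
Proof. intro E. apply (mulg_cancel_l x). rewrite E, mulgV. reflexivity. Qed.

Lemma invgM x y : ginv (x · y) = ginv y · ginv x.
Proof.
  symmetry. apply invg_uniq.
  rewrite gmulA, <- (gmulA x y), mulgV, mulg1, mulgV. reflexivity.
Qed.

Lemma invg1 : ginv (gone : G) = gone.
Proof. symmetry. apply invg_uniq, gmul1l. Qed.

Lemma commute_invg x y : y · x = x · y -> y · ginv x = ginv x · y.
Proof.
  intro C. apply (mulg_cancel_l x).
  rewrite gmulA, <- C, <- gmulA, mulgV, mulg1, gmulA, mulgV, gmul1l. reflexivity.
Qed.

Lemma npow_succ_r x n : npow x (S n) = npow x n · x.
Proof.
  induction n as [|n IH]; simpl.
  - rewrite mulg1, gmul1l. reflexivity.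
  - simpl in IH. rewrite IH at 1. rewrite gmulA. reflexivity.
Qed.

Lemma zpow1 x : zpow x 1 = x.
Proof. simpl. apply mulg1. Qed.

Lemma zpowN1 x : zpow x (-1) = ginv x.
Proof. simpl. rewrite mulg1. reflexivity. Qed.

Lemma zpow_succ x n : zpow x (Z.succ n) = zpow x n · x.
Proof.
  destruct n as [|p|p]; simpl.
  - rewrite mulg1, gmul1l. reflexivity.
  - rewrite Pos.add_1_r, Pos2Nat.inj_succ. apply npow_succ_r.
  - destruct (Pos.eq_dec p 1) as [->|Hp].
    + simpl. rewrite mulg1, gmulVl. reflexivity.
    + rewrite Z.pos_sub_lt by lia.
      replace (p - 1)%positive with (Pos.pred p) by lia. simpl.
      replace (Pos.to_nat p) with (S (Pos.to_nat (Pos.pred p))) by lia.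
      simpl. rewrite invgM, <- gmulA, gmulVl, mulg1. reflexivity.
Qed.

Lemma zpow_pred x n : zpow x (Z.pred n) = zpow x n · ginv x.
Proof.
  rewrite <- (Z.succ_pred n) at 2.
  rewrite zpow_succ, <- gmulA, mulgV, mulg1. reflexivity.
Qed.

Lemma zpow_add x m n : zpow x (m + n) = zpow x m · zpow x n.
Proof.
  induction n as [|n IH|n IH] using Z.peano_ind.
  - rewrite Z.add_0_r, mulg1. reflexivity.
  - rewrite Z.add_succ_r, !zpow_succ, IH, gmulA. reflexivity.
  - rewrite Z.add_pred_r, !zpow_pred, IH, gmulA. reflexivity.
Qed.

Lemma zpow_opp x n : zpow x (- n) = ginv (zpow x n).
Proof. apply invg_uniq. rewrite <- zpow_add, Z.add_opp_diag_r. reflexivity. Qed.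

Lemma zpow_mul x m n : zpow x (m * n) = zpow (zpow x m) n.
Proof.
  induction n as [|n IH|n IH] using Z.peano_ind.
  - rewrite Z.mul_0_r. reflexivity.
  - rewrite Z.mul_succ_r, zpow_add, zpow_succ, IH. reflexivity.
  - rewrite Z.mul_pred_r, <- Z.add_opp_r, zpow_add, zpow_pred, IH, zpow_opp.
    reflexivity.
Qed.

Lemma zpow_gone n : zpow (gone : G) n = gone.
Proof.
  induction n as [|n IH|n IH] using Z.peano_ind.
  - reflexivity.
  - rewrite zpow_succ, IH, mulg1. reflexivity.
  - rewrite zpow_pred, IH, invg1, mulg1. reflexivity.
Qed.

Lemma commute_zpow x y n : y · x = x · y -> y · zpow x n = zpow x n · y.
Proof.
  intro C. induction n as [|n IH|n IH] using Z.peano_ind.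
  - simpl. rewrite gmul1l, mulg1. reflexivity.
  - rewrite zpow_succ, gmulA, IH, <- !gmulA, C. reflexivity.
  - rewrite zpow_pred, gmulA, IH, <- !gmulA, (commute_invg _ _ C). reflexivity.
Qed.

Lemma zpowM_commute x y n : x · y = y · x -> zpow (x · y) n = zpow x n · zpow y n.
Proof.
  intro C. induction n as [|n IH|n IH] using Z.peano_ind.
  - symmetry. apply gmul1l.
  - rewrite !zpow_succ, IH, <- !gmulA. f_equal.
    rewrite !gmulA. f_equal. symmetry. apply commute_zpow. auto.
  - rewrite !zpow_pred, IH, invgM, <- !gmulA. f_equal.
    rewrite gmulA, <- !zpow_pred.
    symmetry. apply commute_zpow. symmetry. apply commute_invg. auto.
Qed.

Definition torsion x : Prop := exists N, N <> 0%Z /\ zpow x N = gone.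

Lemma finite_subgroup_torsion F x : finite_subgroup G F -> In x F -> torsion x.
Proof.
  intros [NDF [F1 [FM _]]] Fx. apply NNPP. intros Hinf.
  set (powers := map (fun n => zpow x (Z.of_nat n)) (seq 0 (S (length F)))).
  assert (Fpow : forall n, In (zpow x (Z.of_nat n)) F).
  { induction n as [|n IH]; [exact F1|].
    rewrite Nat2Z.inj_succ, zpow_succ. apply FM; assumption. }
  (* distinct exponents give distinct powers, so F would hold |F| + 1 elements *)
  assert (NDpow : NoDup powers).
  { apply (NoDup_nth powers (zpow x (Z.of_nat 0))).
    unfold powers. rewrite length_map, length_seq. intros i j Hi Hj E.
    rewrite !(map_nth (fun n => zpow x (Z.of_nat n))), !seq_nth in E by assumption.
    rewrite !Nat.add_0_l in E.
    destruct (Z.eq_dec (Z.of_nat j - Z.of_nat i) 0) as [Eij|Nij]; [lia|].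
    exfalso. apply Hinf. exists (Z.of_nat j - Z.of_nat i)%Z. split; [exact Nij|].
    apply (mulg_cancel_l (zpow x (Z.of_nat i))).
    rewrite <- zpow_add, mulg1, E. f_equal. lia. }
  assert (Hincl : incl powers F).
  { intros y Hy. unfold powers in Hy. apply in_map_iff in Hy.
    destruct Hy as [n [<- _]]. apply Fpow. }
  pose proof (NoDup_incl_length NDpow Hincl) as Hle.
  unfold powers in Hle. rewrite length_map, length_seq in Hle. lia.
Qed.

Lemma torsion_zpow x n : torsion x -> torsion (zpow x n).
Proof.
  intros [N [HN E]]. exists N. split; [exact HN|].
  rewrite <- zpow_mul, Z.mul_comm, zpow_mul, E. apply zpow_gone.
Qed.

Lemma torsionM_commute x y : x · y = y · x -> torsion x -> torsion y -> torsion (x · y).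
Proof.
  intros C [M [HM EM]] [N [HN EN]]. exists (M * N)%Z. split; [lia|].
  rewrite zpowM_commute by exact C.
  rewrite zpow_mul, EM, zpow_gone, Z.mul_comm, zpow_mul, EN, zpow_gone.
  apply gmul1l.
Qed.

Lemma infinite_order_torsion_zpow x n :
  has_infinite_order G x -> torsion (zpow x n) -> n = 0%Z.
Proof.
  intros Hinf [N [HN E]]. destruct (Z.eq_dec n 0) as [|Hn]; [assumption|].
  exfalso. apply (Hinf (n * N)%Z); [lia|]. rewrite zpow_mul. exact E.
Qed.

Lemma zpow_exponents_unit x y f f' c d :
  has_infinite_order G x -> torsion f -> torsion f' ->
  f · x = x · f -> f' · y = y · f' ->
  y = zpow x c · f -> x = zpow y d · f' -> (c * d = 1)%Z.
Proof.
  intros Hinf Tf Tf' Cfx Cf'y Ey Ex.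
  assert (Cfy : f · y = y · f).
  { rewrite Ey, gmulA, (commute_zpow _ _ _ Cfx). reflexivity. }
  assert (Cff' : f · f' = f' · f).
  { apply (mulg_cancel_l (zpow y d)).
    rewrite !gmulA, <- (commute_zpow _ _ _ Cfy), <- gmulA, <- Ex. exact Cfx. }
  assert (E : zpow x (1 - c * d) = zpow f d · f').
  { apply (mulg_cancel_l (zpow x (c * d))).
    rewrite <- zpow_add, Z.add_sub_assoc, Z.add_simpl_l, zpow1.
    rewrite Ex at 1. rewrite Ey, zpowM_commute, <- zpow_mul, gmulA; [reflexivity|].
    symmetry. apply commute_zpow. exact Cfx. }
  assert (T : torsion (zpow x (1 - c * d))).
  { rewrite E. apply torsionM_commute; [|apply torsion_zpow; exact Tf|exact Tf'].
    symmetry. apply commute_zpow. symmetry. exact Cff'. }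
  apply infinite_order_torsion_zpow in T; [lia|exact Hinf].
Qed.

Lemma conjM k x y : conj k (x · y) = conj k x · conj k y.
Proof.
  unfold conj. rewrite <- !gmulA, (gmulA k (ginv k)), mulgV, gmul1l. reflexivity.
Qed.

Lemma conj_gone k : conj k gone = gone.
Proof. unfold conj. rewrite gmul1l. apply gmulVl. Qed.

Lemma conj_invg k x : conj k (ginv x) = ginv (conj k x).
Proof. apply invg_uniq. rewrite <- conjM, mulgV. apply conj_gone. Qed.

Lemma conj_zpow k x n : conj k (zpow x n) = zpow (conj k x) n.
Proof.
  induction n as [|n IH|n IH] using Z.peano_ind.
  - apply conj_gone.
  - rewrite !zpow_succ, conjM, IH. reflexivity.
  - rewrite !zpow_pred, conjM, IH, conj_invg. reflexivity.
Qed.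

Lemma torsion_conj k x : torsion x -> torsion (conj k x).
Proof.
  intros [N [HN E]]. exists N. split; [exact HN|].
  rewrite <- conj_zpow, E. apply conj_gone.
Qed.

Lemma conj_comp a b x : conj b (conj a x) = conj (a · b) x.
Proof. unfold conj. rewrite invgM, !gmulA. reflexivity. Qed.

Lemma conjK k x : conj (ginv k) (conj k x) = x.
Proof.
  rewrite conj_comp, mulgV. unfold conj. rewrite invg1, gmul1l. apply mulg1.
Qed.

Lemma conjVK k x : conj k (conj (ginv k) x) = x.
Proof.
  rewrite conj_comp, gmulVl. unfold conj. rewrite invg1, gmul1l. apply mulg1.
Qed.

Lemma conj_zpow_self x n : conj x (zpow x n) = zpow x n.
Proof.
  unfold conj. rewrite <- commute_zpow by reflexivity.
  rewrite gmulA, gmulVl. apply gmul1l.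
Qed.

Lemma conj_conj k a y : conj (conj k a) (conj k y) = conj k (conj a y).
Proof. unfold conj at 1. rewrite <- conj_invg, <- !conjM. reflexivity. Qed.

Lemma conjugate_sym x y : conjugate G x y -> conjugate G y x.
Proof. intros [k <-]. exists (ginv k). apply conjK. Qed.

Lemma conjugate_trans x y z : conjugate G x y -> conjugate G y z -> conjugate G x z.
Proof. intros [a <-] [b <-]. exists (a · b). symmetry. apply conj_comp. Qed.

Lemma Eplus_of_zpow_eq x y m n : m <> 0%Z -> zpow y n = zpow x m -> Eplus G x y.
Proof.
  intros Hm E. exists m. split; [exact Hm|].
  rewrite <- E. apply conj_zpow_self.
Qed.

Lemma Eplus_conj k x y : Eplus G x y -> Eplus G (conj k x) (conj k y).
Proof.
  intros [m [Hm E]]. exists m. split; [exact Hm|].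
  rewrite <- conj_zpow, conj_conj, E. reflexivity.
Qed.

Lemma commensurated_sym x y : commensurated G x y -> commensurated G y x.
Proof.
  intros [m [n [k [Hm [Hn E]]]]]. exists n, m, (ginv k).
  split; [exact Hn|]. split; [exact Hm|]. rewrite <- E. apply conjK.
Qed.

Lemma commensurated_trans x y z :
  commensurated G x y -> commensurated G y z -> commensurated G x z.
Proof.
  intros [m1 [n1 [k1 [Hm1 [Hn1 E1]]]]] [m2 [n2 [k2 [Hm2 [Hn2 E2]]]]].
  exists (m1 * m2)%Z, (n2 * n1)%Z, (k1 · k2). split; [lia|]. split; [lia|].
  rewrite <- conj_comp, (zpow_mul x), conj_zpow, E1, <- zpow_mul.
  rewrite (Z.mul_comm n1), (zpow_mul y), conj_zpow, E2, <- zpow_mul. reflexivity.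
Qed.

Definition signed_translates x (F : list G) : list G :=
  map (gmul x) F ++ map (gmul (ginv x)) F.

Lemma primitive_commensurated_conjugate_translate h0 F0 h :
  has_infinite_order G h0 -> finite_subgroup G F0 ->
  (forall f, In f F0 -> f · h0 = h0 · f) ->
  (forall x, Eplus G h0 x <-> exists c f, In f F0 /\ x = zpow h0 c · f) ->
  primitive G h -> commensurated G h0 h ->
  exists t, In t (signed_translates h0 F0) /\ conjugate G h t.
Proof.
  intros Hinf0 HF0 C0 E0 [_ [Fh [HFh [Ch Eh]]]] [m [n [k [Hm [Hn E]]]]].
  set (h' := conj (ginv k) h).
  assert (Epow : zpow h' n = zpow h0 m).
  { unfold h'. rewrite <- conj_zpow, <- E. apply conjK. }
  destruct (proj1 (E0 h') (Eplus_of_zpow_eq _ _ _ _ Hm Epow)) as [c [f [Hf Eh']]].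
  assert (Ek : Eplus G h (conj k h0)).
  { pose proof (Eplus_conj k _ _ (Eplus_of_zpow_eq _ _ _ _ Hn (eq_sym Epow))) as X.
    unfold h' in X. rewrite conjVK in X. exact X. }
  destruct (proj1 (Eh _) Ek) as [d [f' [Hf' Ek']]].
  assert (Eh0 : h0 = zpow h' d · conj (ginv k) f').
  { rewrite <- (conjK k h0), Ek', conjM, conj_zpow. reflexivity. }
  assert (Hcd : (c * d = 1)%Z).
  { apply (zpow_exponents_unit h0 h' f (conj (ginv k) f') c d Hinf0); auto.
    - exact (finite_subgroup_torsion F0 f HF0 Hf).
    - exact (torsion_conj _ _ (finite_subgroup_torsion Fh f' HFh Hf')).
    - unfold h'. rewrite <- !conjM, Ch by exact Hf'. reflexivity. }
  exists h'. split; [|exists (ginv k); reflexivity].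
  unfold signed_translates. apply in_or_app.
  apply Z.eq_mul_1 in Hcd. destruct Hcd as [-> | ->].
  - left. apply in_map_iff. exists f. rewrite zpow1 in Eh'. auto.
  - right. apply in_map_iff. exists f. rewrite zpowN1 in Eh'. auto.
Qed.

End Groups.

Lemma length_le_of_represented {A : Type} (R : A -> A -> Prop) (l S : list A) :
  (forall x y t, R x t -> R y t -> R x y) ->
  (forall x, In x l -> exists t, In t S /\ R x t) ->
  (forall i j, (i < length l)%nat -> (j < length l)%nat -> i <> j ->
     forall d, ~ R (nth i l d) (nth j l d)) ->
  (length l <= length S)%nat.
Proof.
  intros Rtr Hrep Hnr. destruct l as [|a l']; [simpl; lia|].
  set (rep := fun x => epsilon (inhabits a) (fun t => In t S /\ R x t)).
  assert (Hrep' : forall x, In x (a :: l') -> In (rep x) S /\ R x (rep x)).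
  { intros x Hx. apply epsilon_spec, Hrep, Hx. }
  assert (ND : NoDup (map rep (a :: l'))).
  { apply (NoDup_nth _ (rep a)). rewrite length_map. intros i j Hi Hj E.
    rewrite !map_nth in E. destruct (Nat.eq_dec i j) as [|Hij]; [assumption|].
    exfalso. apply (Hnr i j Hi Hj Hij a), (Rtr _ _ (rep (nth i (a :: l') a))).
    - apply Hrep', nth_In, Hi.
    - rewrite E. apply Hrep', nth_In, Hj. }
  assert (Hincl : incl (map rep (a :: l')) S).
  { intros t Ht. apply in_map_iff in Ht. destruct Ht as [x [<- Hx]]. apply Hrep', Hx. }
  pose proof (NoDup_incl_length ND Hincl) as Hle. rewrite length_map in Hle. exact Hle.
Qed.

Theorem lemma4p10 (G : Group) (M : nat) :
  non_elementary_hyperbolic G ->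
  max_finite_subgroup_order G M ->
  forall g : G, has_infinite_order G g ->
  forall l : list G,
    (forall h, In h l -> primitive G h /\ commensurated G g h) ->
    (forall i j, (i < length l)%nat -> (j < length l)%nat -> i <> j ->
       forall d, ~ conjugate G (nth i l d) (nth j l d)) ->
    (length l <= 2 * M)%nat.
Proof.
  intros _ [_ Hmax] g _ l Hl Hnc.
  destruct l as [|h0 l']; [simpl; lia|].
  destruct (Hl h0 (or_introl eq_refl)) as [[Hinf0 [F0 [HF0 [C0 E0]]]] Hgh0].
  enough (Hle : (length (h0 :: l') <= length (signed_translates h0 F0))%nat).
  { unfold signed_translates in Hle. rewrite length_app, !length_map in Hle.
    pose proof (Hmax F0 HF0). lia. }
  apply (length_le_of_represented (conjugate G)); [|intros h Hh|exact Hnc].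
  - intros x y t Hxt Hyt. exact (conjugate_trans _ _ _ Hxt (conjugate_sym _ _ Hyt)).
  - destruct (Hl h Hh) as [Hprim Hgh].
    apply primitive_commensurated_conjugate_translate; try assumption.
    exact (commensurated_trans _ _ _ (commensurated_sym _ _ Hgh0) Hgh).
Qed.
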